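(* Let $A=(a_{i,j})$ be a symmetric $n\times n$ matrix with nonnegative entries whose associated undirected graph on $\{1,\dots,n\}$ (edge $\{i,j\}$ present iff $a_{i,j}>0$, self-loops allowed) is connected, let $\deg(i)=\sum_{j=1}^n a_{i,j}>0$, and let $\gamma_1,\dots,\gamma_n>0$. Let $\beta^*\in[0,1]^n$ be an equilibrium point, i.e. $F(\beta^* )=\beta^*$. If $\beta_i^*=0$ for some $i$, then $\beta_i^*=0$ for all $i$; likewise, if $\beta_i^*=1$ for some $i$, then $\beta_i^*=1$ for all $i$.
   Context: For $\mu\in[0,1]$ and $\gamma>0$ define $f(\mu,\gamma)=\dfrac{\gamma\mu}{1+(\gamma-1)\mu}$. For $\beta\in[0,1]^n$ let $\mu_i(\beta)=\frac{1}{\deg(i)}\sum_{j=1}^n a_{i,j}\beta_j$ and define $F:[0,1]^n\to[0,1]^n$ by $F_i(\beta)=f(\mu_i(\beta),\gamma_i)$. A point $\beta$ with $F(\beta)=\beta$ is called an equilibrium point. *)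

From mathcomp Require Import all_boot all_order all_algebra.
Set Implicit Arguments. Unset Strict Implicit. Unset Printing Implicit Defensive.
Import Order.TTheory GRing.Theory Num.Theory.
Local Open Scope ring_scope.

Definition f_eq (R : realFieldType) (mu gamma : R) : R :=
  gamma * mu / (1 + (gamma - 1) * mu).

Definition deg (R : realFieldType) (n : nat) (A : 'M[R]_n) (i : 'I_n) : R :=
  \sum_(j < n) A i j.

Definition mu (R : realFieldType) (n : nat) (A : 'M[R]_n) (beta : 'I_n -> R)
  (i : 'I_n) : R :=
  (deg A i)^-1 * \sum_(j < n) A i j * beta j.

Definition F (R : realFieldType) (n : nat) (A : 'M[R]_n) (gamma : 'I_n -> R)
  (beta : 'I_n -> R) (i : 'I_n) : R :=
  f_eq (mu A beta i) (gamma i).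

Definition adj (R : realFieldType) (n : nat) (A : 'M[R]_n) : rel 'I_n :=
  fun i j => 0 < A i j.

Definition graph_connected (R : realFieldType) (n : nat) (A : 'M[R]_n) : Prop :=
  forall i j : 'I_n, connect (adj A) i j.

From mathcomp Require Import all_boot all_order all_algebra.
From mathcomp Require Import ring lra.
Set Implicit Arguments. Unset Strict Implicit. Unset Printing Implicit Defensive.
Import Order.TTheory GRing.Theory Num.Theory.
Local Open Scope ring_scope.

(* On [0, 1], [f(mu, gamma)] vanishes only at [mu = 0] and equals [1] only at
   [mu = 1]; so at an equilibrium [beta i = 0] forces [mu_i(beta) = 0] and
   [beta i = 1] forces [mu_i(beta) = 1].  As [mu_i] is an average of the
   [beta j] with weights [a_{i,j} >= 0], this makes [beta j] equal to [0]
   (resp. [1]) at every neighbour [j] of [i]; connectedness spreads the value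
   to all vertices. *)

Lemma connect_closed_prop (T : finType) (e : rel T) (P : T -> Prop) :
  (forall x y, e x y -> P x -> P y) ->
  forall x y, connect e x y -> P x -> P y.
Proof.
move=> closedP x y /connectP [p]; elim: p x => [|z p IHp] x /=.
  by move=> _ ->.
by case/andP=> exz pz ey Px; apply: IHp pz ey _; apply: closedP Px.
Qed.

Lemma psumr_mul_eq0 (R : numDomainType) (I : finType) (a b : I -> R) :
  (forall j, 0 <= a j) -> (forall j, 0 <= b j) ->
  \sum_j a j * b j = 0 -> forall j, 0 < a j -> b j = 0.
Proof.
move=> a_ge0 b_ge0 sum0 j a_gt0.
have /eqP : a j * b j = 0.
  by apply: (psumr_eq0P _ sum0) => // k _; apply: mulr_ge0.
by rewrite mulf_eq0 gt_eqF //= => /eqP.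
Qed.

Section Response.

Variables (R : realFieldType) (m gamma : R).
Hypotheses (gamma_gt0 : 0 < gamma) (m01 : 0 <= m <= 1).

Lemma f_eq_denom_gt0 : 0 < 1 + (gamma - 1) * m.
Proof.
have gm_ge0 : 0 <= gamma * m by apply: mulr_ge0; [apply: ltW | case/andP: m01].
have [m_lt1|m_ge1] := ltrP m 1; first lra.
have -> : m = 1 by apply/eqP; rewrite eq_le m_ge1 andbT; case/andP: m01.
by rewrite mulr1 addrC subrK.
Qed.

Lemma f_eq_eq0 : f_eq m gamma = 0 -> m = 0.
Proof.
rewrite /f_eq => /eqP.
rewrite mulf_eq0 invr_eq0 (gt_eqF f_eq_denom_gt0) orbF mulf_eq0 gt_eqF //=.
by move/eqP.
Qed.

Lemma f_eq_eq1 : f_eq m gamma = 1 -> m = 1.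
Proof.
rewrite /f_eq => /(congr1 ( *%R^~ (1 + (gamma - 1) * m))).
by rewrite divfK ?gt_eqF ?f_eq_denom_gt0 // mul1r => den_eq; lra.
Qed.

End Response.

Section Average.

Variables (R : realFieldType) (n : nat) (A : 'M[R]_n) (beta : 'I_n -> R).
Hypotheses (A_ge0 : forall i j, 0 <= A i j) (deg_gt0 : forall i, 0 < deg A i).
Hypothesis beta01 : forall i, 0 <= beta i <= 1.

Let beta_ge0 j : 0 <= beta j. Proof. by case/andP: (beta01 j). Qed.
Let beta_le1 j : beta j <= 1. Proof. by case/andP: (beta01 j). Qed.

Lemma mu_mul_deg i : mu A beta i * deg A i = \sum_j A i j * beta j.
Proof. by rewrite /mu mulrAC mulVf ?mul1r // gt_eqF. Qed.

Lemma mu_ge0 i : 0 <= mu A beta i.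
Proof.
apply: mulr_ge0; first by rewrite invr_ge0 ltW.
by apply: sumr_ge0 => j _; apply: mulr_ge0.
Qed.

Lemma mu_le1 i : mu A beta i <= 1.
Proof.
rewrite -(ler_pM2r (deg_gt0 i)) mu_mul_deg mul1r.
by apply: ler_sum => j _; rewrite -[leRHS]mulr1 ler_wpM2l.
Qed.

Lemma mu_eq0 i j : mu A beta i = 0 -> adj A i j -> beta j = 0.
Proof.
move=> mu0; apply: (psumr_mul_eq0 (A_ge0 i) beta_ge0).
by rewrite -mu_mul_deg mu0 mul0r.
Qed.

Lemma mu_eq1 i j : mu A beta i = 1 -> adj A i j -> beta j = 1.
Proof.
move=> mu1 aij; apply/esym/subr0_eq.
apply: (@psumr_mul_eq0 _ _ (A i) (fun k => 1 - beta k) (A_ge0 i) _ _ j aij).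
  by move=> k; rewrite subr_ge0.
rewrite (eq_bigr (fun k => A i k - A i k * beta k)) => [|k _]; last by ring.
by rewrite sumrB -mu_mul_deg mu1 mul1r subrr.
Qed.

End Average.

Theorem lemma1 (R : realFieldType) (n : nat) (A : 'M[R]_n) (gamma : 'I_n -> R)
  (beta : 'I_n -> R) :
  A^T = A ->
  (forall i j, 0 <= A i j) ->
  graph_connected A ->
  (forall i, 0 < deg A i) ->
  (forall i, 0 < gamma i) ->
  (forall i, 0 <= beta i <= 1) ->
  (forall i, F A gamma beta i = beta i) ->
  ((exists i, beta i = 0) -> forall i, beta i = 0) /\
  ((exists i, beta i = 1) -> forall i, beta i = 1).
Proof.
move=> _ A_ge0 conn deg_gt0 gamma_gt0 beta01 fixed.
have mu01 i : 0 <= mu A beta i <= 1 by rewrite mu_ge0 ?mu_le1.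
split=> -[i0 beta_i0] i.
- apply: (connect_closed_prop (P := fun k => beta k = 0) _ (conn i0 i) beta_i0).
  move=> x y axy beta_x; apply: (mu_eq0 A_ge0 deg_gt0 beta01 _ axy).
  by apply: (f_eq_eq0 (gamma_gt0 x) (mu01 x)); rewrite -beta_x; apply: fixed.
- apply: (connect_closed_prop (P := fun k => beta k = 1) _ (conn i0 i) beta_i0).
  move=> x y axy beta_x; apply: (mu_eq1 A_ge0 deg_gt0 beta01 _ axy).
  by apply: (f_eq_eq1 (gamma_gt0 x) (mu01 x)); rewrite -beta_x; apply: fixed.
Qed.
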